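(* Fix $2\le d\le7$. Let $w$ be a good sequence of weights normalized to be a probability distribution. There exists $c\in(0,1)$ such that $\psi^{(k)}(\mathsf R(w))$ belongs to $\mathcal{S}_{0,1,c}$ for all $k$ large enough, and $\psi^{(k)}(\mathsf R(w))$ converges pointwise as $k\to\infty$.
   Context: A sequence $w=(w(i))_{i\in\mathbb{Z}}\in[0,\infty)^{\mathbb{Z}}$ is good if $w(i)=w(-i)$ for all $i$, $w(0)>0$, and there exist an integer $k\ge0$ and $c\in[0,1)$ with $w(i)=w(i+1)$ for $0\le i<k$ and $w(i+1)\le c\,w(i)$ for $i\ge k$. For a probability distribution $z$ on $\mathbb{Z}$ set $A(z)_i=(z_{i-1}+z_i+z_{i+1})^d$, $F(z)=A(z)/\sum_iA(z)_i$. $\mathcal{E}$ is the set of symmetric probability distributions on $\mathbb{Z}$ whose support is an interval or all of $\mathbb{Z}$ (a normalized good $w$ lies in $\mathcal{E}$). $\mathsf R\colon\mathcal{E}\to[0,\infty)^{\{1,2,\dots\}}$, $\mathsf R(z)_i=z_i/z_{i-1}$ if $z_{i-1}\ne0$ and $0$ otherwise; $\mathsf R$ is injective on $\mathcal{E}$, $\mathcal{R}:=\mathsf R(\mathcal{E})$, $\psi:=\mathsf R\circ F\circ\mathsf R^{-1}\colon\mathcal{R}\to\mathcal{R}$, i.e. $\psi(x)_1=\big(\frac{1+x_1+x_1x_2}{1+2x_1}\big)^d$ and $\psi(x)_n=x_{n-1}^d\big(\frac{1+x_n+x_nx_{n+1}}{1+x_{n-1}+x_{n-1}x_n}\big)^d$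 for $n\ge2$. $\psi^{(k)}$ is the $k$-fold iterate. For reals $a,b,c$, $\mathcal{S}_{a,b,c}:=\{x\in\mathcal{R}: a\le x_1\le b,\ 0\le x_n\le c\ \forall n\ge2\}$. *)

From Stdlib Require Import Reals ZArith Lia.
Open Scope R_scope.

(* Sum of a nonnegative sequence over Z, grouped as z 0 + sum_{n>=1} (z n + z (-n)). *)
Definition Zsum_term (z : Z -> R) (n : nat) : R :=
  match n with
  | O => z 0%Z
  | S _ => z (Z.of_nat n) + z (- Z.of_nat n)%Z
  end.

Definition is_prob (z : Z -> R) : Prop :=
  (forall i, 0 <= z i) /\ infinite_sum (Zsum_term z) 1.

Definition good (w : Z -> R) : Prop :=
  (forall i, 0 <= w i) /\
  (forall i, w i = w (- i)%Z) /\
  0 < w 0%Z /\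
  exists (k : nat) (c : R), 0 <= c < 1 /\
    (forall i : nat, (i < k)%nat -> w (Z.of_nat i) = w (Z.of_nat (S i))) /\
    (forall i : nat, (k <= i)%nat -> w (Z.of_nat (S i)) <= c * w (Z.of_nat i)).

Definition in_E (z : Z -> R) : Prop :=
  is_prob z /\ (forall i, z i = z (- i)%Z) /\
  ((exists a b : Z, forall i, z i <> 0 <-> (a <= i <= b)%Z) \/
   (forall i, z i <> 0)).

(* Sequences indexed by {1,2,...} are represented as nat -> R; index 0 is
   unused and always set to 0. *)
Definition Rmap (z : Z -> R) (n : nat) : R :=
  match n with
  | O => 0
  | S _ => if Req_EM_T (z (Z.of_nat n - 1)%Z) 0 then 0
           else z (Z.of_nat n) / z (Z.of_nat n - 1)%Z
  end.

Definition in_calR (x : nat -> R) : Prop := exists z, in_E z /\ x = Rmap z.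

Definition psi (d : nat) (x : nat -> R) (n : nat) : R :=
  match n with
  | O => 0
  | S O => ((1 + x 1%nat + x 1%nat * x 2%nat) / (1 + 2 * x 1%nat)) ^ d
  | S m => x m ^ d *
      ((1 + x n + x n * x (S n)) / (1 + x m + x m * x n)) ^ d
  end.

Definition psi_iter (d k : nat) (x : nat -> R) : nat -> R := Nat.iter k (psi d) x.

Definition S_abc (a b c : R) (x : nat -> R) : Prop :=
  in_calR x /\ a <= x 1%nat <= b /\ (forall n : nat, (2 <= n)%nat -> 0 <= x n <= c).

(* The ratios [x = Rmap w] of a good sequence lie in [[0, 1]], zeros propagate to
   the right, and [x n <= c < 1] from some index on.  As [psi_h] is increasing in each
   argument, such a tail bound moves one index to the left per step of [psi] (becoming
   [(2 + c) / 3]) until it holds for all [n >= 2]; from then on [psi_h 1 c c ^ 2 <= c]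
   preserves it, and the resulting geometric decay makes [x] the ratio sequence of an
   explicit distribution in [E].  The same estimate pushes the tail bound down to [1/2].
   Convergence is then computer-assisted: iterating the interval extension of [psi] on
   boxes [[l1, u1] x [l2, u2] x [0, s] x [0, s] x ...], rounded outward to multiples of
   [2^-16], one reaches a box mapped into itself on which [psi] contracts a sup norm
   weighting the first coordinate by [1] and the others by a larger constant, the
   Lipschitz bounds being checked in exact rational arithmetic.  Hence each coordinate
   of the orbit is a Cauchy sequence. *)

From Stdlib Require Import Reals ZArith Lia Lra Psatz QArith Qreals Qround Qminmax Bool.
From Stdlib Require Import Classical FunctionalExtensionality.
Open Scope R_scope.

Lemma Rdiv_le_compat x x' y y' : 0 <= x <= x' -> 0 < y' <= y -> x / y <= x' / y'.
Proof.
  intros Hx Hy. unfold Rdiv. apply Rmult_le_compat; try lra.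
  - left. apply Rinv_0_lt_compat. lra.
  - apply Rinv_le_contravar; lra.
Qed.

Lemma Rdiv_le_cross x y x' y' : 0 < y -> 0 < y' -> x * y' <= x' * y -> x / y <= x' / y'.
Proof.
  intros Hy Hy' H. apply Rmult_le_reg_r with (y * y'); [nra|].
  replace (x / y * (y * y')) with (x * y') by (field; lra).
  replace (x' / y' * (y * y')) with (x' * y) by (field; lra). exact H.
Qed.

Lemma pow_le_pow_r_le1 y m n : 0 <= y <= 1 -> (m <= n)%nat -> y ^ n <= y ^ m.
Proof.
  intros Hy Hmn. induction Hmn as [|n _ IH]; [lra|]. simpl.
  assert (0 <= y ^ n) by (apply pow_le; lra). nra.
Qed.

Lemma pow_unit y n : 0 <= y <= 1 -> 0 <= y ^ n <= 1.
Proof. intros. split; [apply pow_le; lra | apply (pow_le_pow_r_le1 y 0 n); [lra | lia]]. Qed.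

Lemma pow_le_base y n : 0 <= y <= 1 -> (1 <= n)%nat -> y ^ n <= y.
Proof. intros. rewrite <- (pow_1 y) at 2. apply pow_le_pow_r_le1; auto. Qed.

(** * Monotonicity of the components of [psi] *)

Definition psi_g (x1 x2 : R) : R := (1 + x1 + x1 * x2) / (1 + 2 * x1).
Definition psi_h (a b e : R) : R := a * (1 + b + b * e) / (1 + a + a * b).

Lemma psi_1 d x : psi d x 1 = psi_g (x 1%nat) (x 2%nat) ^ d.
Proof. reflexivity. Qed.

Lemma psi_SS d x k :
  psi d x (S (S k)) = psi_h (x (S k)) (x (S (S k))) (x (S (S (S k)))) ^ d.
Proof. unfold psi, psi_h. rewrite <- Rpow_mult_distr. f_equal. unfold Rdiv. ring. Qed.

Lemma psi_iter_succ_r d k x : psi_iter d (S k) x = psi_iter d k (psi d x).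
Proof. apply Nat.iter_succ_r. Qed.

Lemma psi_iter_add d p q x : psi_iter d (p + q) x = psi_iter d p (psi_iter d q x).
Proof. apply Nat.iter_add. Qed.

Lemma psi_g_nonneg x1 x2 : 0 <= x1 -> 0 <= x2 -> 0 <= psi_g x1 x2.
Proof. intros. apply Rle_mult_inv_pos; nra. Qed.

Lemma psi_g_le_1 x1 x2 : 0 <= x1 -> 0 <= x2 <= 1 -> psi_g x1 x2 <= 1.
Proof.
  intros. unfold psi_g. apply Rmult_le_reg_r with (1 + 2 * x1); [lra|].
  unfold Rdiv. rewrite Rmult_assoc, Rinv_l by lra. nra.
Qed.

Lemma psi_g_le_compat x1 x1' x2 x2' :
  0 <= x1' <= x1 -> 0 <= x2 <= x2' -> x2' <= 1 -> psi_g x1 x2 <= psi_g x1' x2'.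
Proof.
  intros. unfold psi_g.
  apply Rle_trans with ((1 + x1 + x1 * x2') / (1 + 2 * x1)).
  - apply Rdiv_le_compat; split; nra.
  - apply Rdiv_le_cross; nra.
Qed.

Lemma psi_h_nonneg a b e : 0 <= a -> 0 <= b -> 0 <= e -> 0 <= psi_h a b e.
Proof. intros. apply Rle_mult_inv_pos; [apply Rmult_le_pos|]; nra. Qed.

Lemma psi_h_le_compat a b e a' b' e' :
  0 <= a <= a' -> 0 <= b <= b' -> 0 <= e <= e' -> psi_h a b e <= psi_h a' b' e'.
Proof.
  intros. unfold psi_h.
  apply Rle_trans with (a' * (1 + b + b * e) / (1 + a' + a' * b)).
  { assert (0 <= (1 + b + b * e) * (a' - a)) by (apply Rmult_le_pos; nra).
    apply Rdiv_le_cross; nra. }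
  apply Rle_trans with (a' * (1 + b' + b' * e) / (1 + a' + a' * b')).
  { assert (0 <= a' * (b' - b) * (1 + e + a' * e)).
    { apply Rmult_le_pos; [apply Rmult_le_pos|]; nra. }
    apply Rdiv_le_cross; nra. }
  assert (0 <= a' * b' * (e' - e)) by (apply Rmult_le_pos; [apply Rmult_le_pos|]; nra).
  assert (0 <= a' * b' * e) by (apply Rmult_le_pos; [apply Rmult_le_pos|]; nra).
  apply Rdiv_le_compat; split; nra.
Qed.

Lemma psi_h_diag c : 0 <= c -> psi_h c c c = c.
Proof. intros. unfold psi_h. field. nra. Qed.

Lemma psi_h_le_1 a b e : 0 <= a <= 1 -> 0 <= b <= 1 -> 0 <= e <= 1 -> psi_h a b e <= 1.
Proof.
  intros. rewrite <- (psi_h_diag 1) by lra. apply psi_h_le_compat; lra.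
Qed.

Lemma psi_h_eq0 a b e : 0 <= a -> 0 <= b -> 0 <= e -> psi_h a b e = 0 -> a = 0.
Proof.
  intros Ha Hb He H. unfold psi_h, Rdiv in H.
  apply Rmult_integral in H as [H|H].
  - apply Rmult_integral in H as [H|H]; nra.
  - exfalso. revert H. apply Rinv_neq_0_compat. nra.
Qed.

(** * Tail bounds along the orbit *)

Definition admissible (x : nat -> R) : Prop :=
  x 0%nat = 0 /\ (forall n, (1 <= n)%nat -> 0 <= x n <= 1) /\
  (forall n, (1 <= n)%nat -> x n = 0 -> x (S n) = 0).

Definition tail_le (m : nat) (c : R) (x : nat -> R) : Prop :=
  forall n, (m <= n)%nat -> x n <= c.

Lemma tail_le_weaken m c c' x : c <= c' -> tail_le m c x -> tail_le m c' x.
Proof. intros Hc H n Hn. specialize (H n Hn). lra. Qed.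

Lemma admissible_psi_h x k : admissible x ->
  0 <= psi_h (x (S k)) (x (S (S k))) (x (S (S (S k)))) <= 1.
Proof.
  intros [_ [H01 _]].
  destruct (H01 (S k)), (H01 (S (S k))), (H01 (S (S (S k)))); try lia.
  split; [apply psi_h_nonneg | apply psi_h_le_1]; lra.
Qed.

Lemma psi_1_pos d x : admissible x -> 0 < psi d x 1.
Proof.
  intros [_ [H01 _]]. destruct (H01 1%nat), (H01 2%nat); try lia.
  rewrite psi_1. apply pow_lt. unfold psi_g. apply Rdiv_lt_0_compat; nra.
Qed.

Lemma admissible_psi d x : (1 <= d)%nat -> admissible x -> admissible (psi d x).
Proof.
  intros Hd Hx. pose proof (psi_1_pos d x Hx) as Hpos1.
  pose proof Hx as [_ [H01 Hzero]].
  split; [reflexivity | split].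
  - intros [|[|k]] Hn; [lia| |].
    + rewrite psi_1. destruct (H01 1%nat), (H01 2%nat); try lia.
      apply pow_unit. split; [apply psi_g_nonneg | apply psi_g_le_1]; lra.
    + rewrite psi_SS. apply pow_unit, admissible_psi_h, Hx.
  - intros [|[|k]] Hn H0; [lia | lra |].
    rewrite psi_SS in H0 |- *.
    destruct (H01 (S k)), (H01 (S (S k))), (H01 (S (S (S k)))); try lia.
    assert (Hh : psi_h (x (S k)) (x (S (S k))) (x (S (S (S k)))) = 0).
    { apply NNPP. intro Hne. exact (pow_nonzero _ d Hne H0). }
    apply psi_h_eq0 in Hh; try lra.
    rewrite (Hzero (S k) ltac:(lia) Hh).
    unfold psi_h at 1. rewrite Rmult_0_l, Rdiv_0_l. apply pow_ne_zero. lia.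
Qed.

Lemma admissible_psi_iter d k x :
  (1 <= d)%nat -> admissible x -> admissible (psi_iter d k x).
Proof. intros Hd Hx. induction k; [exact Hx|]. apply admissible_psi; auto. Qed.

Lemma tail_le_psi_pred d m c x : (1 <= d)%nat -> admissible x -> (3 <= m)%nat -> 0 <= c <= 1 ->
  tail_le m c x -> tail_le (pred m) ((2 + c) / 3) (psi d x).
Proof.
  intros Hd Hx Hm Hc Htail [|[|k]] Hn; try lia.
  pose proof (admissible_psi_h x k Hx) as Hh.
  destruct Hx as [_ [H01 _]].
  destruct (H01 (S k)), (H01 (S (S k))), (H01 (S (S (S k)))); try lia.
  assert (Htop : psi_h (x (S k)) (x (S (S k))) (x (S (S (S k)))) <= psi_h 1 1 c).
  { apply psi_h_le_compat; try lra. split; [lra|]. apply Htail. lia. }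
  replace (psi_h 1 1 c) with ((2 + c) / 3) in Htop by (unfold psi_h; field).
  rewrite psi_SS. apply Rle_trans with (2 := Htop).
  apply pow_le_base; [exact Hh | lia].
Qed.

Lemma psi_h_1cc_sq_le c : 1/2 <= c <= 1 -> psi_h 1 c c ^ 2 <= 1 - 73/72 * (1 - c).
Proof.
  intros Hc. unfold psi_h.
  replace ((1 * (1 + c + c * c) / (1 + 1 + 1 * c)) ^ 2)
    with ((1 + c + c * c) ^ 2 / (2 + c) ^ 2) by (field; lra).
  apply Rmult_le_reg_r with ((2 + c) ^ 2); [nra|].
  unfold Rdiv. rewrite Rmult_assoc, Rinv_l by (apply pow_nonzero; lra).
  assert (0 <= (1 - c) * (c * c * c + 2 * c * c + c - 1 - (2 + c) * (2 + c) / 72)).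
  { apply Rmult_le_pos; nra. }
  nra.
Qed.

Lemma tail_le_2_psi d c x : (2 <= d)%nat -> admissible x -> 1/2 <= c <= 1 ->
  tail_le 2 c x -> tail_le 2 (1 - 73/72 * (1 - c)) (psi d x).
Proof.
  intros Hd Hx Hc Htail [|[|k]] Hn; try lia.
  pose proof (admissible_psi_h x k Hx) as Hh.
  destruct Hx as [_ [H01 _]].
  destruct (H01 (S k)), (H01 (S (S k))), (H01 (S (S (S k)))); try lia.
  assert (Htop : psi_h (x (S k)) (x (S (S k))) (x (S (S (S k)))) <= psi_h 1 c c).
  { apply psi_h_le_compat; repeat split; try lra; apply Htail; lia. }
  rewrite psi_SS. eapply Rle_trans; [|apply (psi_h_1cc_sq_le c Hc)].
  apply Rle_trans with (psi_h (x (S k)) (x (S (S k))) (x (S (S (S k)))) ^ 2).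
  - apply pow_le_pow_r_le1; [exact Hh | lia].
  - apply pow_incr. lra.
Qed.

Lemma tail_le_2_psi_iter d c x k : (2 <= d)%nat -> admissible x -> 1/2 <= c <= 1 ->
  tail_le 2 c x -> tail_le 2 c (psi_iter d k x).
Proof.
  intros Hd Hx Hc Htail. induction k as [|k IH]; [exact Htail|].
  apply tail_le_weaken with (1 - 73/72 * (1 - c)); [lra|].
  apply tail_le_2_psi; auto. apply admissible_psi_iter; auto. lia.
Qed.

Lemma tail_le_2_of_tail_le d m c x : (2 <= d)%nat -> admissible x -> 1/2 <= c < 1 ->
  tail_le m c x -> exists c', 1/2 <= c' < 1 /\ tail_le 2 c' (psi_iter d (m - 2) x).
Proof.
  intros Hd. revert x c. induction m as [|m IH]; intros x c Hx Hc Htail.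
  - exists c. split; [exact Hc|]. intros n Hn. apply Htail. lia.
  - destruct (le_lt_dec m 1) as [Hm|Hm].
    + exists c. split; [exact Hc|]. replace (S m - 2)%nat with 0%nat by lia.
      intros n Hn. apply Htail. lia.
    + destruct (IH (psi d x) ((2 + c) / 3)) as [c' [Hc' Htail']].
      * apply admissible_psi; auto. lia.
      * lra.
      * apply (tail_le_psi_pred d (S m)); auto; lia || lra.
      * exists c'. split; [exact Hc'|].
        replace (S m - 2)%nat with (S (m - 2)) by lia. rewrite psi_iter_succ_r. exact Htail'.
Qed.

Lemma tail_le_2_half_of_gap d j : (2 <= d)%nat -> forall x e, admissible x -> 0 < e ->
  1/2 <= e * (1 + INR j / 72) -> tail_le 2 (1 - e) x ->
  exists K, tail_le 2 (1/2) (psi_iter d K x).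
Proof.
  intros Hd. induction j as [|j IH]; intros x e Hx He Hj Htail.
  - exists 0%nat. apply tail_le_weaken with (1 - e); [|exact Htail]. simpl in Hj. lra.
  - destruct (Rle_dec (1/2) e) as [Hbig|Hsmall].
    { exists 0%nat. apply tail_le_weaken with (1 - e); [lra|exact Htail]. }
    destruct (IH (psi d x) (73/72 * e)) as [K HK].
    + apply admissible_psi; auto. lia.
    + lra.
    + rewrite S_INR in Hj. pose proof (pos_INR j). nra.
    + replace (1 - 73/72 * e) with (1 - 73/72 * (1 - (1 - e))) by ring.
      apply tail_le_2_psi; auto. lra.
    + exists (S K). rewrite psi_iter_succ_r. exact HK.
Qed.

Lemma tail_le_2_half_eventually d c x : (2 <= d)%nat -> admissible x -> c < 1 -> tail_le 2 c x ->
  exists K, tail_le 2 (1/2) (psi_iter d K x).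
Proof.
  intros Hd Hx Hc Htail.
  destruct (INR_unbounded (36 / (1 - c))) as [j Hj].
  apply (tail_le_2_half_of_gap d j Hd x (1 - c)); auto; [lra| |].
  - apply Rmult_gt_compat_r with (r := 1 - c) in Hj; [|lra].
    replace (36 / (1 - c) * (1 - c)) with 36 in Hj by (field; lra). nra.
  - replace (1 - (1 - c)) with c by ring. exact Htail.
Qed.

(** * Ratio sequences with a geometric tail lie in [calR] *)

Fixpoint ratio_prod (x : nat -> R) (n : nat) : R :=
  match n with O => 1 | S k => ratio_prod x k * x (S k) end.

Section RatioDistribution.
Variable x : nat -> R.
Hypothesis Hx : admissible x.

Lemma ratio_prod_nonneg n : 0 <= ratio_prod x n.
Proof.
  destruct Hx as [_ [H01 _]].
  induction n as [|n IH]; simpl; [lra|]. apply Rmult_le_pos; [exact IH|]. apply H01. lia.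
Qed.

Lemma ratio_prod_eq0 k : ratio_prod x k = 0 -> x (S k) = 0.
Proof.
  destruct Hx as [_ [_ Hzero]].
  induction k as [|k IH]; simpl; intros H; [lra|].
  apply Rmult_integral in H as [H|H]; apply Hzero; auto; lia.
Qed.

Lemma ratio_prod_support :
  (forall n, ratio_prod x n <> 0) \/
  exists m, (1 <= m)%nat /\ forall n, ratio_prod x n <> 0 <-> (n < m)%nat.
Proof.
  destruct (classic (exists n, ratio_prod x n = 0)) as [Hex|Hnone]; [right|left].
  - destruct (dec_inh_nat_subset_has_unique_least_element (fun n => ratio_prod x n = 0)
      (fun n => classic _) Hex) as [m [[Hm Hleast] _]].
    assert (Hzero : forall n, (m <= n)%nat -> ratio_prod x n = 0).
    { intros n Hn. induction Hn as [|n _ IH]; [exact Hm|]. simpl. rewrite IH. ring. }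
    exists m. split.
    + destruct m; [simpl in Hm; lra | lia].
    + intros n. split.
      * intros Hne. destruct (le_lt_dec m n); [exfalso; auto | auto].
      * intros Hlt H0. specialize (Hleast n H0). lia.
  - intros n H0. apply Hnone. exists n. exact H0.
Qed.

Variable l : R.
Hypothesis Hl : Un_cv (sum_f_R0 (fun k => ratio_prod x (S k))) l.

Lemma ratio_prod_sum_nonneg : 0 <= l.
Proof.
  apply Rle_trans with (sum_f_R0 (fun k => ratio_prod x (S k)) 0).
  - apply cond_pos_sum. intros. apply ratio_prod_nonneg.
  - apply growing_ineq; [|exact Hl].
    intros n. rewrite tech5. pose proof (ratio_prod_nonneg (S (S n))). lra.
Qed.

(* [ratio_dist i] is proportional to [x 1 * ... * x |i|]; before normalisation the
   total mass is [1 + 2 l]. *)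
Definition ratio_dist (i : Z) : R := ratio_prod x (Z.abs_nat i) / (1 + 2 * l).

Lemma ratio_dist_partial_sum N :
  sum_f_R0 (Zsum_term ratio_dist) (S N) =
  (1 + 2 * sum_f_R0 (fun k => ratio_prod x (S k)) N) / (1 + 2 * l).
Proof.
  pose proof ratio_prod_sum_nonneg.
  induction N as [|N IH].
  - simpl. unfold ratio_dist. simpl. field. lra.
  - rewrite tech5, IH, (tech5 (fun k => ratio_prod x (S k))).
    unfold Zsum_term, ratio_dist. rewrite Zabs2Nat.id.
    replace (Z.abs_nat (- Z.of_nat (S (S N)))) with (S (S N)) by lia. field. lra.
Qed.

Lemma ratio_dist_is_prob : is_prob ratio_dist.
Proof.
  pose proof ratio_prod_sum_nonneg. split.
  - intros i. apply Rle_mult_inv_pos; [apply ratio_prod_nonneg | lra].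
  - intros eps Heps. destruct (Hl (eps / 2)) as [N HN]; [lra|].
    exists (S N). intros [|n] Hn; [lia|]. rewrite ratio_dist_partial_sum.
    specialize (HN n ltac:(lia)). unfold Rdist in *.
    set (s := sum_f_R0 _ n) in *.
    replace ((1 + 2 * s) / (1 + 2 * l) - 1) with (2 * (s - l) / (1 + 2 * l)) by (field; lra).
    unfold Rdiv. rewrite Rabs_mult, Rabs_mult, (Rabs_pos_eq 2), Rabs_inv, (Rabs_pos_eq (1 + 2 * l)) by lra.
    apply Rle_lt_trans with (2 * Rabs (s - l)); [|lra].
    rewrite <- (Rmult_1_r (2 * Rabs (s - l))) at 2. apply Rmult_le_compat_l.
    + pose proof (Rabs_pos (s - l)). lra.
    + rewrite <- Rinv_1. apply Rinv_le_contravar; lra.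
Qed.

Lemma ratio_dist_neq0 i : ratio_dist i <> 0 <-> ratio_prod x (Z.abs_nat i) <> 0.
Proof.
  pose proof ratio_prod_sum_nonneg. unfold ratio_dist. split; intros Hne E; apply Hne.
  - rewrite E. apply Rdiv_0_l.
  - apply Rmult_integral in E as [E|E]; [exact E|].
    exfalso. revert E. apply Rinv_neq_0_compat. lra.
Qed.

Lemma ratio_dist_in_E : in_E ratio_dist.
Proof.
  split; [exact ratio_dist_is_prob | split].
  - intros i. unfold ratio_dist. f_equal. f_equal. lia.
  - destruct ratio_prod_support as [Hall|[m [Hm Hsupp]]].
    + right. intros i. apply ratio_dist_neq0, Hall.
    + left. exists (- (Z.of_nat m - 1))%Z, (Z.of_nat m - 1)%Z. intros i.
      rewrite ratio_dist_neq0, Hsupp. lia.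
Qed.

Lemma Rmap_ratio_dist : Rmap ratio_dist = x.
Proof.
  pose proof ratio_prod_sum_nonneg.
  apply functional_extensionality. intros [|k].
  - symmetry. apply Hx.
  - unfold Rmap. replace (Z.of_nat (S k) - 1)%Z with (Z.of_nat k) by lia.
    destruct (Req_EM_T (ratio_dist (Z.of_nat k)) 0) as [E|E].
    + symmetry. apply ratio_prod_eq0. apply NNPP. intro Hne.
      apply (ratio_dist_neq0 (Z.of_nat k)); [|exact E]. rewrite Zabs2Nat.id. exact Hne.
    + rewrite ratio_dist_neq0, Zabs2Nat.id in E.
      unfold ratio_dist. rewrite !Zabs2Nat.id. simpl. field. split; lra.
Qed.

End RatioDistribution.

Lemma ratio_prod_le_pow x c k :
  admissible x -> tail_le 2 c x -> ratio_prod x (S k) <= c ^ k.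
Proof.
  intros Hx Htail. pose proof Hx as [_ [H01 _]].
  induction k as [|k IH].
  - simpl. destruct (H01 1%nat); [lia|]. lra.
  - change (ratio_prod x (S (S k))) with (ratio_prod x (S k) * x (S (S k))).
    destruct (H01 (S (S k))); [lia|].
    pose proof (Htail (S (S k)) ltac:(lia)). pose proof (ratio_prod_nonneg x Hx (S k)).
    rewrite <- tech_pow_Rmult, (Rmult_comm c). apply Rmult_le_compat; lra.
Qed.

Lemma in_calR_of_tail_le x c : admissible x -> 0 <= c < 1 -> tail_le 2 c x -> in_calR x.
Proof.
  intros Hx Hc Htail.
  assert (Hsum : {l | Un_cv (sum_f_R0 (fun k => ratio_prod x (S k))) l}).
  { apply Rseries_CV_comp with (fun k => 1 * c ^ k).
    - intros k. rewrite Rmult_1_l.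
      split; [apply ratio_prod_nonneg | apply ratio_prod_le_pow]; assumption.
    - exists (/ (1 - c)). apply GP_infinite. rewrite Rabs_pos_eq; lra. }
  destruct Hsum as [l Hl].
  exists (ratio_dist x l). split.
  - apply ratio_dist_in_E; assumption.
  - symmetry. apply Rmap_ratio_dist; assumption.
Qed.

(** * Lipschitz estimates for [psi] on a box *)

Lemma pow_sub_le u v M k : 0 <= v <= u -> u <= M ->
  u ^ S k - v ^ S k <= INR (S k) * M ^ k * (u - v).
Proof.
  intros Hv HM. induction k as [|k IH]; [simpl; lra|].
  assert (v ^ S k <= M ^ S k) by (apply pow_incr; lra).
  assert (v ^ S k <= u ^ S k) by (apply pow_incr; lra).
  assert (0 <= v ^ S k) by (apply pow_le; lra).
  replace (u ^ S (S k) - v ^ S (S k)) with (u * (u ^ S k - v ^ S k) + (u - v) * v ^ S k)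
    by (simpl; ring).
  rewrite S_INR. change (M ^ S k) with (M * M ^ k) in *.
  assert (u * (u ^ S k - v ^ S k) <= M * (INR (S k) * M ^ k * (u - v))).
  { apply Rmult_le_compat; lra. }
  assert ((u - v) * v ^ S k <= (u - v) * (M * M ^ k)) by (apply Rmult_le_compat_l; lra).
  nra.
Qed.

Lemma pow_lipschitz u v M d : 0 <= u <= M -> 0 <= v <= M ->
  Rabs (u ^ d - v ^ d) <= INR d * M ^ pred d * Rabs (u - v).
Proof.
  intros Hu Hv. destruct d as [|k]; [simpl; rewrite Rminus_diag, Rabs_R0; lra|].
  simpl pred. destruct (Rle_dec v u) as [Hle|Hlt].
  - rewrite !Rabs_pos_eq; [apply pow_sub_le; lra | lra |].
    enough (v ^ S k <= u ^ S k) by lra. apply pow_incr. lra.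
  - rewrite (Rabs_minus_sym (u ^ _)), (Rabs_minus_sym u).
    rewrite !Rabs_pos_eq; [apply pow_sub_le; lra | lra |].
    enough (u ^ S k <= v ^ S k) by lra. apply pow_incr. lra.
Qed.

Lemma Rabs_scale_le k c v : 0 <= k <= c -> Rabs (k * v) <= c * Rabs v.
Proof.
  intros. rewrite Rabs_mult, Rabs_pos_eq by lra.
  apply Rmult_le_compat_r; [apply Rabs_pos | lra].
Qed.

Lemma psi_g_lipschitz alo aM plo a a' p p' :
  0 <= alo -> alo <= a <= aM -> alo <= a' <= aM ->
  0 <= plo -> plo <= p <= 1 -> plo <= p' <= 1 ->
  Rabs (psi_g a p - psi_g a' p') <=
  (1 - plo) / ((1 + 2 * alo) * (1 + 2 * alo)) * Rabs (a - a') +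
  aM / (1 + 2 * alo) * Rabs (p - p').
Proof.
  intros. unfold psi_g.
  replace ((1 + a + a * p) / (1 + 2 * a) - (1 + a' + a' * p') / (1 + 2 * a'))
    with ((1 - p) / ((1 + 2 * a) * (1 + 2 * a')) * (a' - a) + a' / (1 + 2 * a') * (p - p'))
    by (field; lra).
  rewrite (Rabs_minus_sym a a').
  eapply Rle_trans; [apply Rabs_triang|]. apply Rplus_le_compat; apply Rabs_scale_le.
  - split; [apply Rle_mult_inv_pos; nra|]. apply Rdiv_le_compat; split; nra.
  - split; [apply Rle_mult_inv_pos; nra|]. apply Rdiv_le_compat; split; nra.
Qed.

(* Telescope through [(a', b, e)] and [(a', b', e)]: each partial difference is an
   explicit fraction, all of whose denominators are at least [D]. *)
Lemma psi_h_lipschitz alo blo aM bM eM a a' b b' e e' :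
  0 <= alo -> alo <= a <= aM -> alo <= a' <= aM ->
  0 <= blo -> blo <= b <= bM -> blo <= b' <= bM ->
  0 <= e <= eM -> 0 <= e' <= eM ->
  let D := 1 + alo + alo * blo in
  Rabs (psi_h a b e - psi_h a' b' e') <=
  (1 + bM + bM * eM) / (D * D) * Rabs (a - a') +
  aM * (1 + eM + aM * eM) / (D * D) * Rabs (b - b') + aM * bM / D * Rabs (e - e').
Proof.
  intros. unfold psi_h.
  assert (HD : 1 <= D) by (unfold D; nra).
  assert (Hab : D <= 1 + a + a * b) by (unfold D; nra).
  assert (Hab' : D <= 1 + a' + a' * b) by (unfold D; nra).
  assert (Ha'b' : D <= 1 + a' + a' * b') by (unfold D; nra).
  replace (a * (1 + b + b * e) / (1 + a + a * b) - a' * (1 + b' + b' * e') / (1 + a' + a' * b'))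
    with ((1 + b + b * e) / ((1 + a + a * b) * (1 + a' + a' * b)) * (a - a') +
          a' * (1 + e + a' * e) / ((1 + a' + a' * b) * (1 + a' + a' * b')) * (b - b') +
          a' * b' / (1 + a' + a' * b') * (e - e'))
    by (field; split; nra).
  eapply Rle_trans; [apply Rabs_triang|]. apply Rplus_le_compat;
    [eapply Rle_trans; [apply Rabs_triang|]; apply Rplus_le_compat|];
    apply Rabs_scale_le; split;
    try (apply Rle_mult_inv_pos; [try apply Rmult_le_pos|]; nra).
  - apply Rdiv_le_compat; split; try nra; apply Rmult_le_compat; lra.
  - assert (a' * e <= aM * eM) by (apply Rmult_le_compat; lra).
    apply Rdiv_le_compat; repeat split.
    + apply Rmult_le_pos; nra.
    + apply Rmult_le_compat; nra.
    + nra.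
    + apply Rmult_le_compat; lra.
  - apply Rdiv_le_compat; split; try nra; apply Rmult_le_compat; lra.
Qed.

Definition head_gain (d : nat) (La l1 u1 l2 u2 : R) : R :=
  INR d * psi_g l1 u2 ^ pred d *
  ((1 - l2) / ((1 + 2 * l1) * (1 + 2 * l1)) + u1 / (1 + 2 * l1) / La).

Definition h_gain (d : nat) (lp l ln alo blo aM bM eM : R) : R :=
  let D := 1 + alo + alo * blo in
  l * (INR d * psi_h aM bM eM ^ pred d) *
  ((1 + bM + bM * eM) / (D * D) / lp + aM * (1 + eM + aM * eM) / (D * D) / l +
   aM * bM / D / ln).

Lemma weighted_le c v w T : 0 <= c -> 0 < w -> w * v <= T -> c * v <= c / w * T.
Proof.
  intros Hc Hw H. unfold Rdiv. rewrite Rmult_assoc. apply Rmult_le_compat_l; [exact Hc|].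
  apply Rmult_le_reg_l with w; [exact Hw|]. rewrite <- Rmult_assoc, Rinv_r, Rmult_1_l; lra.
Qed.

Lemma psi_g_pow_contract d La l1 u1 l2 u2 a a' p p' T :
  0 <= l1 -> l1 <= a <= u1 -> l1 <= a' <= u1 ->
  0 <= l2 -> l2 <= p <= u2 -> l2 <= p' <= u2 -> u2 <= 1 -> 0 < La ->
  Rabs (a - a') <= T -> La * Rabs (p - p') <= T ->
  Rabs (psi_g a p ^ d - psi_g a' p' ^ d) <= head_gain d La l1 u1 l2 u2 * T.
Proof.
  intros. set (A := (1 - l2) / ((1 + 2 * l1) * (1 + 2 * l1))). set (B := u1 / (1 + 2 * l1)).
  assert (0 <= A) by (apply Rle_mult_inv_pos; nra).
  assert (0 <= B) by (apply Rle_mult_inv_pos; nra).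
  assert (HM : forall q r, l1 <= q <= u1 -> l2 <= r <= u2 ->
            0 <= psi_g q r <= psi_g l1 u2).
  { intros q r Hq Hr. split; [apply psi_g_nonneg | apply psi_g_le_compat]; lra. }
  eapply Rle_trans; [apply pow_lipschitz; [apply HM | apply HM]; lra|].
  unfold head_gain. fold A B. rewrite (Rmult_assoc _ (A + B / La) T).
  apply Rmult_le_compat_l; [apply Rmult_le_pos; [apply pos_INR | apply pow_le]; apply HM; lra|].
  eapply Rle_trans; [apply (psi_g_lipschitz l1 u1 l2); lra|]. fold A B.
  pose proof (weighted_le B (Rabs (p - p')) La T).
  assert (A * Rabs (a - a') <= A * T) by (apply Rmult_le_compat_l; lra).
  rewrite Rmult_plus_distr_r. lra.
Qed.

Lemma psi_h_pow_contract d lp l ln alo blo aM bM eM a a' b b' e e' T :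
  0 <= alo -> alo <= a <= aM -> alo <= a' <= aM ->
  0 <= blo -> blo <= b <= bM -> blo <= b' <= bM ->
  0 <= e <= eM -> 0 <= e' <= eM -> 0 < lp -> 0 < l -> 0 < ln ->
  lp * Rabs (a - a') <= T -> l * Rabs (b - b') <= T -> ln * Rabs (e - e') <= T ->
  l * Rabs (psi_h a b e ^ d - psi_h a' b' e' ^ d) <= h_gain d lp l ln alo blo aM bM eM * T.
Proof.
  intros. unfold h_gain. cbv zeta. set (D := 1 + alo + alo * blo).
  set (ca := (1 + bM + bM * eM) / (D * D)). set (cb := aM * (1 + eM + aM * eM) / (D * D)).
  set (ce := aM * bM / D). set (K := INR d * psi_h aM bM eM ^ pred d).
  assert (1 <= D) by (unfold D; nra).
  assert (0 <= ca) by (apply Rle_mult_inv_pos; nra).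
  assert (0 <= cb) by (apply Rle_mult_inv_pos; [apply Rmult_le_pos|]; nra).
  assert (0 <= ce) by (apply Rle_mult_inv_pos; nra).
  assert (HM : forall q r t, alo <= q <= aM -> blo <= r <= bM -> 0 <= t <= eM ->
            0 <= psi_h q r t <= psi_h aM bM eM).
  { intros q r t Hq Hr Ht. split; [apply psi_h_nonneg | apply psi_h_le_compat]; lra. }
  assert (0 <= K).
  { apply Rmult_le_pos; [apply pos_INR | apply pow_le]. apply (HM aM bM eM); lra. }
  rewrite (Rmult_assoc l K), (Rmult_assoc l), (Rmult_assoc K).
  apply Rmult_le_compat_l; [lra|].
  eapply Rle_trans; [apply pow_lipschitz; [apply HM | apply HM]; lra|]. fold K.
  apply Rmult_le_compat_l; [lra|].
  eapply Rle_trans; [apply (psi_h_lipschitz alo blo aM bM eM); lra|]. fold D ca cb ce.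
  pose proof (weighted_le ca (Rabs (a - a')) lp T).
  pose proof (weighted_le cb (Rabs (b - b')) l T).
  pose proof (weighted_le ce (Rabs (e - e')) ln T).
  rewrite !Rmult_plus_distr_r. lra.
Qed.

Definition in_box (l1 u1 l2 u2 s : R) (x : nat -> R) : Prop :=
  l1 <= x 1%nat <= u1 /\ l2 <= x 2%nat <= u2 /\ forall n, (3 <= n)%nat -> 0 <= x n <= s.

Lemma in_box_prev l1 u1 l2 u2 s x n : 0 <= l2 -> in_box l1 u1 l2 u2 s x -> (3 <= n)%nat ->
  0 <= x (pred n) <= Rmax u2 s.
Proof.
  intros Hl2 [_ [H2 H3]] Hn. pose proof (Rmax_l u2 s). pose proof (Rmax_r u2 s).
  destruct (Nat.eq_dec n 3) as [->|Hne]; simpl; [lra|].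
  specialize (H3 (pred n) ltac:(lia)). lra.
Qed.

Lemma psi_in_box d l1 u1 l2 u2 s x : 0 <= l1 -> 0 <= l2 -> u2 <= 1 ->
  in_box l1 u1 l2 u2 s x ->
  in_box (psi_g u1 l2 ^ d) (psi_g l1 u2 ^ d) (psi_h l1 l2 0 ^ d) (psi_h u1 u2 s ^ d)
    (psi_h (Rmax u2 s) s s ^ d) (psi d x).
Proof.
  intros Hl1 Hl2 Hu2 Hx. pose proof Hx as [H1 [H2 H3]]. pose proof (H3 3%nat (le_n 3)).
  split; [split | split; [split |]].
  - rewrite psi_1. apply pow_incr. split; [apply psi_g_nonneg|apply psi_g_le_compat]; lra.
  - rewrite psi_1. apply pow_incr. split; [apply psi_g_nonneg|apply psi_g_le_compat]; lra.
  - rewrite psi_SS. apply pow_incr. split; [apply psi_h_nonneg|apply psi_h_le_compat]; lra.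
  - rewrite psi_SS. apply pow_incr. split; [apply psi_h_nonneg|apply psi_h_le_compat]; lra.
  - intros [|[|k]] Hn; try lia. rewrite psi_SS.
    pose proof (in_box_prev _ _ _ _ _ _ (S (S k)) Hl2 Hx ltac:(lia)) as Hprev.
    simpl in Hprev. destruct (H3 (S (S k))), (H3 (S (S (S k)))); try lia.
    split; [apply pow_le, psi_h_nonneg; lra|].
    apply pow_incr. split; [apply psi_h_nonneg|apply psi_h_le_compat]; lra.
Qed.

Definition wclose (La T : R) (x y : nat -> R) : Prop :=
  Rabs (x 1%nat - y 1%nat) <= T /\ forall n, (2 <= n)%nat -> La * Rabs (x n - y n) <= T.

Lemma psi_wclose d La rho l1 u1 l2 u2 s x y T :
  0 <= l1 -> 0 <= l2 -> u2 <= 1 -> 0 < La ->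
  head_gain d La l1 u1 l2 u2 <= rho ->
  h_gain d 1 La La l1 l2 u1 u2 s <= rho ->
  h_gain d La La La 0 0 (Rmax u2 s) s s <= rho ->
  in_box l1 u1 l2 u2 s x -> in_box l1 u1 l2 u2 s y -> wclose La T x y ->
  wclose La (rho * T) (psi d x) (psi d y).
Proof.
  intros Hl1 Hl2 Hu2 HLa Hrow1 Hrow2 Hrow3 Hx Hy [HT1 HT].
  pose proof Hx as [Hx1 [Hx2 Hx3]]. pose proof Hy as [Hy1 [Hy2 Hy3]].
  assert (HT0 : 0 <= T) by (pose proof (Rabs_pos (x 1%nat - y 1%nat)); lra).
  split.
  - rewrite !psi_1. pose proof (HT 2%nat (le_n 2)).
    eapply Rle_trans; [|apply Rmult_le_compat_r; [exact HT0 | exact Hrow1]].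
    apply (psi_g_pow_contract d La l1 u1 l2 u2 _ _ _ _ T); assumption.
  - intros [|[|[|k]]] Hn; try lia; rewrite !psi_SS.
    + pose proof (Hx3 3%nat (le_n 3)). pose proof (Hy3 3%nat (le_n 3)).
      pose proof (HT 2%nat (le_n 2)). pose proof (HT 3%nat ltac:(lia)).
      eapply Rle_trans; [|apply Rmult_le_compat_r; [exact HT0 | exact Hrow2]].
      apply (psi_h_pow_contract d 1 La La l1 l2 u1 u2 s _ _ _ _ _ _ T); assumption || lra.
    + pose proof (in_box_prev _ _ _ _ _ _ (S (S (S k))) Hl2 Hx ltac:(lia)).
      pose proof (in_box_prev _ _ _ _ _ _ (S (S (S k))) Hl2 Hy ltac:(lia)).
      pose proof (Hx3 (S (S (S k))) ltac:(lia)). pose proof (Hy3 (S (S (S k))) ltac:(lia)).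
      pose proof (Hx3 (S (S (S (S k)))) ltac:(lia)). pose proof (Hy3 (S (S (S (S k)))) ltac:(lia)).
      pose proof (HT (S (S k)) ltac:(lia)). pose proof (HT (S (S (S k))) ltac:(lia)).
      pose proof (HT (S (S (S (S k)))) ltac:(lia)). simpl pred in *.
      eapply Rle_trans; [|apply Rmult_le_compat_r; [exact HT0 | exact Hrow3]].
      apply (psi_h_pow_contract d La La La 0 0 (Rmax u2 s) s s _ _ _ _ _ _ T);
        assumption || lra.
Qed.

(** * Convergence of the orbit of a contraction *)

Section ContractionConvergence.
Variables (F : (nat -> R) -> nat -> R) (P : (nat -> R) -> Prop) (La rho T0 : R).
Hypotheses (HLa : 1 <= La) (Hrho : 0 <= rho < 1)
  (HF_inv : forall x, P x -> P (F x))
  (HF_contr : forall x y T, P x -> P y -> wclose La T x y -> wclose La (rho * T) (F x) (F y))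
  (Hdiam : forall x y, P x -> P y -> wclose La T0 x y).

Lemma iter_invariant k x : P x -> P (Nat.iter k F x).
Proof. intros Hx. induction k; simpl; auto. Qed.

Lemma iter_wclose k x y : P x -> P y ->
  wclose La (rho ^ k * T0) (Nat.iter k F x) (Nat.iter k F y).
Proof.
  intros Hx Hy. induction k as [|k IH].
  - rewrite pow_O, Rmult_1_l. auto.
  - simpl. rewrite Rmult_assoc. apply HF_contr; auto; apply iter_invariant; auto.
Qed.

Lemma wclose_coord T x y n : wclose La T x y -> (1 <= n)%nat -> Rabs (x n - y n) <= T.
Proof.
  intros [H1 H2] Hn. destruct (Nat.eq_dec n 1) as [->|Hne]; [exact H1|].
  specialize (H2 n ltac:(lia)). pose proof (Rabs_pos (x n - y n)). nra.
Qed.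

Lemma iter_coord_cauchy x n : P x -> (1 <= n)%nat -> Cauchy_crit (fun k => Nat.iter k F x n).
Proof.
  intros Hx Hn eps Heps.
  assert (HT0 : 0 <= T0) by (eapply Rle_trans; [apply Rabs_pos | apply (wclose_coord _ x x 1)];
    [apply Hdiam|]; auto).
  destruct (pow_lt_1_zero rho ltac:(rewrite Rabs_pos_eq; lra) (eps / (T0 + 1))) as [J HJ].
  { apply Rdiv_lt_0_compat; lra. }
  exists J. intros k m Hk Hm.
  replace k with (J + (k - J))%nat by lia. replace m with (J + (m - J))%nat by lia.
  unfold Rdist. rewrite !Nat.iter_add.
  eapply Rle_lt_trans; [apply (wclose_coord (rho ^ J * T0)); [apply iter_wclose | exact Hn]|];
    try (apply iter_invariant; exact Hx).
  specialize (HJ J (le_n J)). rewrite Rabs_pos_eq in HJ by (apply pow_le; lra).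
  apply Rle_lt_trans with (eps / (T0 + 1) * T0); [apply Rmult_le_compat_r; lra|].
  apply Rmult_lt_reg_r with (T0 + 1); [lra|].
  replace (eps / (T0 + 1) * T0 * (T0 + 1)) with (eps * T0) by (field; lra). nra.
Qed.

End ContractionConvergence.

(** * The rational certificate *)

Open Scope Q_scope.

Fixpoint Qpow (q : Q) (n : nat) : Q := match n with O => 1 | S k => q * Qpow q k end.

(* Exact rational versions of [psi_g], [psi_h], [head_gain] and [h_gain]; [Qred] only
   keeps the numbers small. *)
Definition psi_gQ (x1 x2 : Q) : Q := Qred ((1 + x1 + x1 * x2) / (1 + 2 * x1)).
Definition psi_hQ (a b e : Q) : Q := Qred (a * (1 + b + b * e) / (1 + a + a * b)).

Definition round_down (q : Q) : Q := Qfloor (q * 65536) # 65536.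
Definition round_up (q : Q) : Q := Qceiling (q * 65536) # 65536.

(* A box [[lo1, hi1] x [lo2, hi2] x [0, hi3] x [0, hi3] x ...] of ratio sequences. *)
Record box := Box { lo1 : Q; hi1 : Q; lo2 : Q; hi2 : Q; hi3 : Q }.

(* The interval image of [psi] on a box, rounded outward to multiples of [2^-16].
   The left neighbour of a tail coordinate may be [x 2], hence [Qmax hi2 hi3]. *)
Definition box_step (d : nat) (b : box) : box :=
  Box (round_down (Qpow (psi_gQ (hi1 b) (lo2 b)) d))
      (round_up (Qpow (psi_gQ (lo1 b) (hi2 b)) d))
      (round_down (Qpow (psi_hQ (lo1 b) (lo2 b) 0) d))
      (round_up (Qpow (psi_hQ (hi1 b) (hi2 b) (hi3 b)) d))
      (round_up (Qpow (psi_hQ (Qmax (hi2 b) (hi3 b)) (hi3 b) (hi3 b)) d)).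

Definition box_incl (b' b : box) : bool :=
  Qle_bool (lo1 b) (lo1 b') && Qle_bool (hi1 b') (hi1 b) && Qle_bool (lo2 b) (lo2 b') &&
  Qle_bool (hi2 b') (hi2 b) && Qle_bool (hi3 b') (hi3 b).

Definition head_gainQ (d : nat) (La l1 u1 l2 u2 : Q) : Q :=
  inject_Z (Z.of_nat d) * Qpow (psi_gQ l1 u2) (pred d) *
  ((1 - l2) / ((1 + 2 * l1) * (1 + 2 * l1)) + u1 / (1 + 2 * l1) / La).

Definition h_gainQ (d : nat) (lp l ln alo blo aM bM eM : Q) : Q :=
  let D := 1 + alo + alo * blo in
  l * (inject_Z (Z.of_nat d) * Qpow (psi_hQ aM bM eM) (pred d)) *
  ((1 + bM + bM * eM) / (D * D) / lp + aM * (1 + eM + aM * eM) / (D * D) / l +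
   aM * bM / D / ln).

Definition contracts (d : nat) (La rho : Q) (b : box) : bool :=
  Qle_bool 1 La &&
  Qle_bool (head_gainQ d La (lo1 b) (hi1 b) (lo2 b) (hi2 b)) rho &&
  Qle_bool (h_gainQ d 1 La La (lo1 b) (lo2 b) (hi1 b) (hi2 b) (hi3 b)) rho &&
  Qle_bool (h_gainQ d La La La 0 0 (Qmax (hi2 b) (hi3 b)) (hi3 b) (hi3 b)) rho.

Definition box_half : box := Box 0 1 0 (1 # 2) (1 # 2).

(* The boxes shrink much more slowly for [d = 7]. *)
Definition box_iterations (d : nat) : nat := if (d =? 7)%nat then 100 else 20.

Definition final_box (d : nat) : box := Nat.iter (box_iterations d) (box_step d) box_half.

(* Weight of the coordinates [n >= 2] in the norm for which [psi] contracts. *)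
Definition weight (d : nat) : Q := if (d <=? 5)%nat then 2 else if (d =? 6)%nat then 10 else 30.

Lemma final_box_certified d : (2 <= d <= 7)%nat ->
  box_incl (box_step d (final_box d)) (final_box d) &&
  contracts d (weight d) (99 # 100) (final_box d) = true.
Proof.
  intros Hd.
  destruct d as [|[|[|[|[|[|[|[|d]]]]]]]]; try (exfalso; lia); vm_compute; reflexivity.
Qed.

Close Scope Q_scope.

Lemma Q2R_0 : Q2R 0 = 0.
Proof. unfold Q2R. simpl. field. Qed.

Lemma Q2R_1 : Q2R 1 = 1.
Proof. unfold Q2R. simpl. field. Qed.

Lemma Q2R_2 : Q2R 2 = 2.
Proof. unfold Q2R. simpl. field. Qed.

Lemma Q2R_inject_Z z : Q2R (inject_Z z) = IZR z.
Proof. unfold Q2R. simpl. field. Qed.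

Lemma Q2R_of_nat n : Q2R (inject_Z (Z.of_nat n)) = INR n.
Proof. rewrite Q2R_inject_Z, INR_IZR_INZ. reflexivity. Qed.

Lemma Q2R_div_neq0 x y : Q2R y <> 0 -> Q2R (x / y) = Q2R x / Q2R y.
Proof.
  intros H. apply Q2R_div. intros E. apply H. rewrite (Qeq_eqR _ _ E). apply Q2R_0.
Qed.

Lemma Q2R_Qred q : Q2R (Qred q) = Q2R q.
Proof. apply Qeq_eqR, Qred_correct. Qed.

Lemma Q2R_Qpow q n : Q2R (Qpow q n) = Q2R q ^ n.
Proof. induction n as [|n IH]; simpl; [apply Q2R_1 | rewrite Q2R_mult, IH; reflexivity]. Qed.

Lemma Q2R_Qmax a b : Q2R (Qmax a b) = Rmax (Q2R a) (Q2R b).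
Proof.
  destruct (Q.max_spec a b) as [[Hlt E]|[Hle E]]; rewrite (Qeq_eqR _ _ E).
  - apply Qlt_Rlt in Hlt. rewrite Rmax_right; lra.
  - apply Qle_Rle in Hle. rewrite Rmax_left; lra.
Qed.

Ltac push_Q2R :=
  repeat first [ rewrite Q2R_plus | rewrite Q2R_mult | rewrite Q2R_minus | rewrite Q2R_0
               | rewrite Q2R_1 | rewrite Q2R_2 | rewrite Q2R_Qred | rewrite Q2R_Qpow
               | rewrite Q2R_of_nat | rewrite Q2R_div_neq0 ].

Lemma Q2R_psi_gQ x1 x2 : 0 <= Q2R x1 -> Q2R (psi_gQ x1 x2) = psi_g (Q2R x1) (Q2R x2).
Proof. intros. unfold psi_gQ, psi_g. push_Q2R; [reflexivity | lra]. Qed.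

Lemma Q2R_psi_hQ a b e : 0 <= Q2R a -> 0 <= Q2R b ->
  Q2R (psi_hQ a b e) = psi_h (Q2R a) (Q2R b) (Q2R e).
Proof. intros. unfold psi_hQ, psi_h. push_Q2R; [reflexivity | nra]. Qed.

Lemma Q2R_grid z : Q2R (z # 65536) = IZR z / 65536.
Proof. reflexivity. Qed.

Lemma Q2R_65536 : Q2R 65536 = 65536.
Proof. unfold Q2R. simpl. field. Qed.

Lemma round_down_le q : Q2R (round_down q) <= Q2R q.
Proof.
  pose proof (Qle_Rle _ _ (Qfloor_le (q * 65536))) as H.
  rewrite Q2R_inject_Z, Q2R_mult, Q2R_65536 in H.
  unfold round_down. rewrite Q2R_grid. apply Rmult_le_reg_r with 65536; [lra|].
  unfold Rdiv. rewrite Rmult_assoc, Rinv_l by lra. lra.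
Qed.

Lemma round_up_ge q : Q2R q <= Q2R (round_up q).
Proof.
  pose proof (Qle_Rle _ _ (Qle_ceiling (q * 65536))) as H.
  rewrite Q2R_inject_Z, Q2R_mult, Q2R_65536 in H.
  unfold round_up. rewrite Q2R_grid. apply Rmult_le_reg_r with 65536; [lra|].
  unfold Rdiv. rewrite Rmult_assoc, Rinv_l by lra. lra.
Qed.

Lemma round_down_unit q : 0 <= Q2R q <= 1 -> 0 <= Q2R (round_down q) <= 1.
Proof.
  intros Hq. pose proof (round_down_le q). split; [|lra].
  unfold round_down. rewrite Q2R_grid.
  apply Rle_mult_inv_pos; [|lra]. apply IZR_le.
  rewrite <- (Qfloor_Z 0). apply Qfloor_resp_le, Rle_Qle.
  rewrite Q2R_mult, Q2R_65536, Q2R_inject_Z. lra.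
Qed.

Lemma round_up_unit q : 0 <= Q2R q <= 1 -> 0 <= Q2R (round_up q) <= 1.
Proof.
  intros Hq. pose proof (round_up_ge q). split; [lra|].
  unfold round_up. rewrite Q2R_grid.
  assert (Hc : (Qceiling (q * 65536) <= Qceiling (inject_Z 65536))%Z).
  { apply Qceiling_resp_le, Rle_Qle. rewrite Q2R_mult, Q2R_65536, Q2R_inject_Z. lra. }
  rewrite Qceiling_Z in Hc. apply IZR_le in Hc. unfold Rdiv.
  apply Rmult_le_reg_r with 65536; [lra|]. rewrite Rmult_assoc, Rinv_l by lra. lra.
Qed.

Lemma Q2R_head_gainQ d La l1 u1 l2 u2 : 0 <= Q2R l1 -> 0 < Q2R La ->
  Q2R (head_gainQ d La l1 u1 l2 u2) =
  head_gain d (Q2R La) (Q2R l1) (Q2R u1) (Q2R l2) (Q2R u2).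
Proof.
  intros. unfold head_gainQ, head_gain.
  push_Q2R; try rewrite Q2R_psi_gQ; try reflexivity; nra.
Qed.

Lemma Q2R_h_gainQ d lp l ln alo blo aM bM eM :
  0 <= Q2R alo -> 0 <= Q2R blo -> 0 <= Q2R aM -> 0 <= Q2R bM ->
  0 < Q2R lp -> 0 < Q2R l -> 0 < Q2R ln ->
  Q2R (h_gainQ d lp l ln alo blo aM bM eM) =
  h_gain d (Q2R lp) (Q2R l) (Q2R ln) (Q2R alo) (Q2R blo) (Q2R aM) (Q2R bM) (Q2R eM).
Proof.
  intros. unfold h_gainQ, h_gain. cbv zeta.
  push_Q2R; try rewrite Q2R_psi_hQ; try reflexivity; nra.
Qed.

Definition box_mem (b : box) (x : nat -> R) : Prop :=
  in_box (Q2R (lo1 b)) (Q2R (hi1 b)) (Q2R (lo2 b)) (Q2R (hi2 b)) (Q2R (hi3 b)) x.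

Definition box_valid (b : box) : Prop :=
  0 <= Q2R (lo1 b) <= 1 /\ 0 <= Q2R (hi1 b) <= 1 /\ 0 <= Q2R (lo2 b) <= 1 /\
  0 <= Q2R (hi2 b) <= 1 /\ 0 <= Q2R (hi3 b) <= 1.

Lemma in_box_weaken l1 u1 l2 u2 s l1' u1' l2' u2' s' x :
  l1' <= l1 -> u1 <= u1' -> l2' <= l2 -> u2 <= u2' -> s <= s' ->
  in_box l1 u1 l2 u2 s x -> in_box l1' u1' l2' u2' s' x.
Proof.
  intros ? ? ? ? ? [H1 [H2 H3]]. split; [lra | split; [lra|]].
  intros n Hn. specialize (H3 n Hn). lra.
Qed.

Lemma box_step_valid d b : box_valid b -> box_valid (box_step d b).
Proof.
  intros (Hl1 & Hu1 & Hl2 & Hu2 & Hs).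
  assert (Hg : forall x1 x2, 0 <= Q2R x1 <= 1 -> 0 <= Q2R x2 <= 1 ->
            0 <= Q2R (Qpow (psi_gQ x1 x2) d) <= 1).
  { intros. rewrite Q2R_Qpow, Q2R_psi_gQ by lra. apply pow_unit.
    split; [apply psi_g_nonneg | apply psi_g_le_1]; lra. }
  assert (Hh : forall a b e, 0 <= Q2R a <= 1 -> 0 <= Q2R b <= 1 -> 0 <= Q2R e <= 1 ->
            0 <= Q2R (Qpow (psi_hQ a b e) d) <= 1).
  { intros. rewrite Q2R_Qpow, Q2R_psi_hQ by lra. apply pow_unit.
    split; [apply psi_h_nonneg | apply psi_h_le_1]; lra. }
  assert (H0 : 0 <= Q2R 0 <= 1) by (rewrite Q2R_0; lra).
  assert (Hm : 0 <= Q2R (Qmax (hi2 b) (hi3 b)) <= 1).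
  { rewrite Q2R_Qmax. pose proof (Rmax_l (Q2R (hi2 b)) (Q2R (hi3 b))).
    pose proof (Rmax_lub (Q2R (hi2 b)) (Q2R (hi3 b)) 1). lra. }
  unfold box_valid, box_step. cbn [lo1 hi1 lo2 hi2 hi3].
  split; [apply round_down_unit, Hg; assumption|].
  split; [apply round_up_unit, Hg; assumption|].
  split; [apply round_down_unit, Hh; assumption|].
  split; [apply round_up_unit, Hh; assumption|].
  apply round_up_unit, Hh; assumption.
Qed.

Lemma box_step_mem d b x : box_valid b -> box_mem b x -> box_mem (box_step d b) (psi d x).
Proof.
  intros Hb Hx. pose proof Hb as (Hl1 & Hu1 & Hl2 & Hu2 & Hs).
  assert (Hm : Q2R (Qmax (hi2 b) (hi3 b)) = Rmax (Q2R (hi2 b)) (Q2R (hi3 b))) by apply Q2R_Qmax.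
  pose proof (Rmax_l (Q2R (hi2 b)) (Q2R (hi3 b))).
  pose proof (psi_in_box d (Q2R (lo1 b)) (Q2R (hi1 b)) (Q2R (lo2 b)) (Q2R (hi2 b))
    (Q2R (hi3 b)) x) as Hpsi.
  eapply in_box_weaken; [| | | | | apply Hpsi; [lra | lra | lra | exact Hx]];
    unfold box_step; cbn [lo1 hi1 lo2 hi2 hi3];
    first [eapply Rle_trans; [apply round_down_le|] | eapply Rle_trans; [|apply round_up_ge]];
    rewrite Q2R_Qpow, ?Q2R_psi_gQ, ?Q2R_psi_hQ, ?Q2R_0, ?Hm; lra.
Qed.

Lemma box_incl_mem b' b x : box_incl b' b = true -> box_mem b' x -> box_mem b x.
Proof.
  unfold box_incl. intros H. repeat rewrite andb_true_iff in H.
  destruct H as [[[[H1 H2] H3] H4] H5].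
  apply Qle_bool_iff, Qle_Rle in H1, H2, H3, H4, H5.
  apply in_box_weaken; assumption.
Qed.

Lemma box_step_iter_mem d k b x : box_valid b -> box_mem b x ->
  box_valid (Nat.iter k (box_step d) b) /\ box_mem (Nat.iter k (box_step d) b) (psi_iter d k x).
Proof.
  intros Hb Hx. induction k as [|k [IHb IHx]]; [split; assumption|].
  split; [apply box_step_valid | apply box_step_mem]; assumption.
Qed.

Lemma box_mem_wclose b La x y : box_valid b -> 1 <= La -> box_mem b x -> box_mem b y ->
  wclose La La x y.
Proof.
  intros (Hl1 & Hu1 & Hl2 & Hu2 & Hs) HLa [Hx1 [Hx2 Hx3]] [Hy1 [Hy2 Hy3]].
  assert (Hunit : forall n, (1 <= n)%nat -> Rabs (x n - y n) <= 1).
  { intros n Hn. apply Rabs_le.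
    destruct (Nat.eq_dec n 1) as [->|]; [split; lra|].
    destruct (Nat.eq_dec n 2) as [->|]; [split; lra|].
    destruct (Hx3 n), (Hy3 n); try lia. split; lra. }
  split; [pose proof (Hunit 1%nat (le_n 1)); lra|].
  intros n Hn. pose proof (Hunit n ltac:(lia)). nra.
Qed.

Lemma contracts_sound d La rho b : contracts d La rho b = true -> box_valid b ->
  1 <= Q2R La /\
  head_gain d (Q2R La) (Q2R (lo1 b)) (Q2R (hi1 b)) (Q2R (lo2 b)) (Q2R (hi2 b)) <= Q2R rho /\
  h_gain d 1 (Q2R La) (Q2R La) (Q2R (lo1 b)) (Q2R (lo2 b)) (Q2R (hi1 b)) (Q2R (hi2 b))
    (Q2R (hi3 b)) <= Q2R rho /\
  h_gain d (Q2R La) (Q2R La) (Q2R La) 0 0 (Rmax (Q2R (hi2 b)) (Q2R (hi3 b))) (Q2R (hi3 b))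
    (Q2R (hi3 b)) <= Q2R rho.
Proof.
  unfold contracts. intros H (Hl1 & Hu1 & Hl2 & Hu2 & Hs). repeat rewrite andb_true_iff in H.
  destruct H as [[[H1 H2] H3] H4].
  apply Qle_bool_iff, Qle_Rle in H1, H2, H3, H4. rewrite Q2R_1 in H1.
  pose proof (Rmax_l (Q2R (hi2 b)) (Q2R (hi3 b))).
  rewrite Q2R_head_gainQ in H2 by lra.
  rewrite Q2R_h_gainQ, Q2R_1 in H3 by (rewrite ?Q2R_1; lra).
  rewrite Q2R_h_gainQ, Q2R_0, Q2R_Qmax in H4 by (rewrite ?Q2R_0, ?Q2R_Qmax; lra).
  repeat split; assumption.
Qed.

Lemma box_half_valid : box_valid box_half.
Proof. unfold box_valid, box_half, Q2R. cbn. repeat split; lra. Qed.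

Lemma box_half_mem x : admissible x -> tail_le 2 (1/2) x -> box_mem box_half x.
Proof.
  intros [_ [H01 _]] Htail. unfold box_mem, in_box, box_half, Q2R. cbn.
  destruct (H01 1%nat), (H01 2%nat); try lia. pose proof (Htail 2%nat (le_n 2)).
  split; [lra | split; [lra|]]. intros n Hn. destruct (H01 n); [lia|].
  pose proof (Htail n ltac:(lia)). lra.
Qed.

Lemma psi_iter_cv_of_certified_box d La rho b x n :
  0 <= Q2R rho < 1 -> box_valid b -> box_incl (box_step d b) b = true ->
  contracts d La rho b = true -> box_mem b x -> (1 <= n)%nat ->
  exists l, Un_cv (fun k => psi_iter d k x n) l.
Proof.
  intros Hrho Hb Hincl Hcontr Hx Hn.
  destruct (contracts_sound _ _ _ _ Hcontr Hb) as (HLa & Hrow1 & Hrow2 & Hrow3).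
  pose proof Hb as (Hl1 & _ & Hl2 & Hu2 & _).
  assert (Hcauchy : Cauchy_crit (fun k => psi_iter d k x n)).
  { apply (iter_coord_cauchy (psi d) (box_mem b) (Q2R La) (Q2R rho) (Q2R La));
      try assumption.
    - intros y Hy. apply (box_incl_mem _ _ _ Hincl), box_step_mem; assumption.
    - intros y z T Hy Hz HT.
      apply (psi_wclose d _ _ (Q2R (lo1 b)) (Q2R (hi1 b)) (Q2R (lo2 b)) (Q2R (hi2 b))
        (Q2R (hi3 b))); try lra; assumption.
    - intros y z Hy Hz. apply (box_mem_wclose b); assumption. }
  destruct (R_complete _ Hcauchy) as [l Hl]. exists l. exact Hl.
Qed.

Lemma final_box_eq d : final_box d = Nat.iter (box_iterations d) (box_step d) box_half.
Proof. reflexivity. Qed.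

Lemma psi_iter_cv_of_box_half d x n : (2 <= d <= 7)%nat -> box_mem box_half x ->
  (1 <= n)%nat -> exists l, Un_cv (fun k => psi_iter d k x n) l.
Proof.
  intros Hd Hx Hn.
  destruct (andb_prop _ _ (final_box_certified d Hd)) as [Hincl Hcontr].
  destruct (box_step_iter_mem d (box_iterations d) box_half x box_half_valid Hx) as [Hb Hy].
  (* Rewrite with [final_box_eq] rather than unfold [final_box]: the latter makes the
     kernel reduce the symbolic iterations of [box_step]. *)
  rewrite <- final_box_eq in Hb, Hy.
  assert (Hrho : 0 <= Q2R (99 # 100) < 1) by (unfold Q2R; simpl; lra).
  destruct (psi_iter_cv_of_certified_box d _ _ _ _ n Hrho Hb Hincl Hcontr Hy Hn) as [l Hl].
  exists l. apply CV_shift with (box_iterations d). eapply Un_cv_ext; [|exact Hl].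
  intros k. rewrite psi_iter_add. reflexivity.
Qed.

(** * Ratios of good weights *)

Section GoodWeights.
Variables (w : Z -> R) (k : nat) (c : R).
Hypotheses (Hnn : forall i, 0 <= w i) (Hw0 : 0 < w 0%Z) (Hc : 0 <= c < 1)
  (Hflat : forall i : nat, (i < k)%nat -> w (Z.of_nat i) = w (Z.of_nat (S i)))
  (Hdecay : forall i : nat, (k <= i)%nat -> w (Z.of_nat (S i)) <= c * w (Z.of_nat i)).

Lemma Rmap_succ i : Rmap w (S i) =
  if Req_EM_T (w (Z.of_nat i)) 0 then 0 else w (Z.of_nat (S i)) / w (Z.of_nat i).
Proof. unfold Rmap. replace (Z.of_nat (S i) - 1)%Z with (Z.of_nat i) by lia. reflexivity. Qed.

Lemma good_flat_pos i : (i <= k)%nat -> 0 < w (Z.of_nat i).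
Proof.
  induction i as [|i IH]; intros Hi; [exact Hw0|]. rewrite <- Hflat by lia. apply IH. lia.
Qed.

Lemma Rmap_good_bounds i : 0 <= Rmap w (S i) <= 1 /\ ((k <= i)%nat -> Rmap w (S i) <= c).
Proof.
  rewrite Rmap_succ. destruct (Req_EM_T (w (Z.of_nat i)) 0) as [E|E]; [split; lra|].
  assert (Hpos : 0 < w (Z.of_nat i)) by (pose proof (Hnn (Z.of_nat i)); lra).
  pose proof (Hnn (Z.of_nat (S i))).
  assert (Hratio : (k <= i)%nat -> w (Z.of_nat (S i)) / w (Z.of_nat i) <= c).
  { intros Hki. pose proof (Hdecay i Hki).
    apply Rmult_le_reg_r with (w (Z.of_nat i)); [exact Hpos|].
    unfold Rdiv. rewrite Rmult_assoc, Rinv_l; lra. }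
  split; [|exact Hratio]. split; [apply Rle_mult_inv_pos; lra|].
  destruct (le_lt_dec k i) as [Hki|Hki]; [pose proof (Hratio Hki); lra|].
  rewrite <- Hflat by exact Hki. unfold Rdiv. rewrite Rinv_r; lra.
Qed.

Lemma Rmap_good_admissible : admissible (Rmap w).
Proof.
  split; [reflexivity | split].
  - intros [|i] Hi; [lia|]. apply Rmap_good_bounds.
  - intros [|i] Hi H0; [lia|]. rewrite Rmap_succ.
    assert (Hz : w (Z.of_nat (S i)) = 0).
    { rewrite Rmap_succ in H0. destruct (Req_EM_T (w (Z.of_nat i)) 0) as [E|E].
      - destruct (le_lt_dec k i) as [Hki|Hki].
        + pose proof (Hdecay i Hki). pose proof (Hnn (Z.of_nat (S i))). rewrite E in *. lra.
        + pose proof (good_flat_pos i ltac:(lia)). lra.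
      - unfold Rdiv in H0. apply Rmult_integral in H0 as [H0|H0]; [exact H0|].
        exfalso. revert H0. apply Rinv_neq_0_compat. exact E. }
    destruct (Req_EM_T (w (Z.of_nat (S i))) 0); [reflexivity | contradiction].
Qed.

End GoodWeights.

Lemma good_admissible_tail_le w : good w ->
  exists m c, 1/2 <= c < 1 /\ admissible (Rmap w) /\ tail_le m c (Rmap w).
Proof.
  intros (Hnn & _ & Hw0 & k & c & Hc & Hflat & Hdecay).
  exists (S k), (Rmax c (1/2)).
  pose proof (Rmax_l c (1/2)). pose proof (Rmax_r c (1/2)).
  split; [split; [lra | apply Rmax_lub_lt; lra]|].
  split; [apply (Rmap_good_admissible w k c); assumption|].
  intros [|i] Hi; [lia|].
  destruct (Rmap_good_bounds w k c Hnn Hc Hflat Hdecay i) as [_ Hle]. specialize (Hle ltac:(lia)). lra.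
Qed.

Lemma S_abc_of_tail_le x c : admissible x -> 0 <= c < 1 -> tail_le 2 c x -> S_abc 0 1 c x.
Proof.
  intros Hx Hc Htail. split; [apply (in_calR_of_tail_le x c); assumption|].
  destruct Hx as [_ [H01 _]]. split; [apply H01; lia|].
  intros n Hn. destruct (H01 n); [lia|]. split; [lra | apply Htail; exact Hn].
Qed.

Lemma psi_iter_cv_of_tail_le_2 d c y : (2 <= d <= 7)%nat -> admissible y -> c < 1 ->
  tail_le 2 c y -> forall n, exists l, Un_cv (fun k => psi_iter d k y n) l.
Proof.
  intros Hd Hy Hc Htail [|n].
  - exists 0. intros eps Heps. exists 0%nat. intros k _.
    destruct (admissible_psi_iter d k y ltac:(lia) Hy) as [-> _].
    unfold Rdist. rewrite Rminus_0_r, Rabs_R0. exact Heps.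
  - destruct (tail_le_2_half_eventually d c y ltac:(lia) Hy Hc Htail) as [K Hhalf].
    destruct (psi_iter_cv_of_box_half d _ (S n) Hd
      (box_half_mem _ (admissible_psi_iter d K y ltac:(lia) Hy) Hhalf) ltac:(lia)) as [l Hl].
    exists l. apply CV_shift with K. eapply Un_cv_ext; [|exact Hl].
    intros k. rewrite psi_iter_add. reflexivity.
Qed.

Theorem proposition2p7 (d : nat) (hd : (2 <= d <= 7)%nat)
  (w : Z -> R) (hgood : good w) (hnorm : is_prob w) :
  exists c : R, 0 < c < 1 /\
    (exists K : nat, forall k : nat, (K <= k)%nat ->
        S_abc 0 1 c (psi_iter d k (Rmap w))) /\
    (forall n : nat, exists l : R,
        Un_cv (fun k : nat => psi_iter d k (Rmap w) n) l).
Proof.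
  assert (Hd : (2 <= d)%nat) by lia.
  destruct (good_admissible_tail_le w hgood) as (m & c0 & Hc0 & Hadm & Htail0).
  destruct (tail_le_2_of_tail_le d m c0 _ Hd Hadm Hc0 Htail0) as (c & Hc & Htail).
  set (K := (m - 2)%nat) in Htail.
  assert (Hy : admissible (psi_iter d K (Rmap w))) by (apply admissible_psi_iter; auto; lia).
  exists c. split; [lra | split].
  - exists K. intros k Hk. replace k with ((k - K) + K)%nat by lia. rewrite psi_iter_add.
    apply S_abc_of_tail_le; [apply admissible_psi_iter; auto; lia | lra |].
    apply tail_le_2_psi_iter; auto; lra.
  - intros n. destruct (psi_iter_cv_of_tail_le_2 d c _ hd Hy ltac:(lra) Htail n) as [l Hl].
    exists l. apply CV_shift with K. eapply Un_cv_ext; [|exact Hl].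
    intros k. rewrite psi_iter_add. reflexivity.
Qed.
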